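(* Let $\mathcal F=\{F^c_{t,k}\}$ be an F-system and $R,\lambda$ reals such that $|F^A_t\cup F^B_t|\le Rt+\lambda$ for every positive integer $t$. Then for every even positive integer $t$, $$|S_{2t}\cup Z_{3t,2t}|\ge 2\,|S_t\cup Z_{3t/2,t}|+(10-7R)t-3\lambda.$$
   Context: F-system: a family $\mathcal F=\{F^c_{t,k}\}$ of sets of positive integers, indexed by $c\in\{A,B\}$ and integers $0<k\le t$, such that (F1) $|F^c_{t,k}|\ge k$ for all $c,t,k$; and (F2) $F^A_{t,k}\cap F^B_{t',k'}=\emptyset$ for all $k\le t$, $k'\le t'$ with $k+k'\le\max(t,t')$. Notation: $F^c_t=\bigcup_{0<\kappa\le\tau\le t}F^c_{\tau,\kappa}$ for $c\in\{A,B\}$; $S_t=F^A_t\cap F^B_t$; for even $t$, $Z_{3t/2,t}=F^A_{3t/2,t}\cap F^B_{3t/2,t}$ (so also $Z_{3t,2t}=F^A_{3t,2t}\cap F^B_{3t,2t}$). *)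

From Stdlib Require Import Reals.
From mathcomp Require Import all_boot.
Set Implicit Arguments. Unset Strict Implicit. Unset Printing Implicit Defensive.

(* A family F^c_{t,k} is modelled as  F : bool -> nat -> nat -> seq nat,
   F c t k being (a list enumerating) the set F^c_{t,k};
   c = true stands for A, c = false stands for B.
   Lists are read as sets: membership is [\in], cardinality is [scard]. *)

Definition scard (s : seq nat) : nat := size (undup s).

Definition is_Fsystem (F : bool -> nat -> nat -> seq nat) : Prop :=
  (forall c t k, (0 < k <= t)%N -> forall x, x \in F c t k -> (0 < x)%N) /\
  (forall c t k, (0 < k <= t)%N -> (k <= scard (F c t k))%N) /\
  (forall t k t' k', (0 < k <= t)%N -> (0 < k' <= t')%N ->
     (k + k' <= maxn t t')%N ->
     forall x, x \in F true t k -> x \in F false t' k' -> False).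

Definition FU (F : bool -> nat -> nat -> seq nat) (c : bool) (t : nat) : seq nat :=
  flatten [seq flatten [seq F c tau kappa | kappa <- iota 1 tau] | tau <- iota 1 t].

Definition Sset (F : bool -> nat -> nat -> seq nat) (t : nat) : seq nat :=
  [seq x <- FU F true t | x \in FU F false t].

Definition Zset (F : bool -> nat -> nat -> seq nat) (a b : nat) : seq nat :=
  [seq x <- F true a b | x \in F false a b].

(** Put Y := S_t ∪ Z_{3t/2,t}, X := S_{2t} ∪ Z_{3t,2t}
    and U_s := F^A_s ∪ F^B_s.  Every element of Y has, on both sides A and B,
    a witness F^c_{τ,κ} with τ <= 2t and κ <= t; by (F2) it therefore lies in
    neither F^A_{2t,t}, F^B_{2t,t} nor F^A_{3t,2t}, F^B_{3t,2t}, and it lies in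
    X and in F^A_{2t} ∩ F^B_{2t}.  Checking the few possible membership
    patterns gives, for every x,
      2[x∈Y] + Σ_c ([x∈F^c_{2t,t}] + [x∈F^c_{2t,2t}] + [x∈F^c_{3t,2t}])
        <= [x∈X] + 2[x∈U_{2t}] + [x∈U_{3t}].
    Summing over x and using (F1) on the left and the growth bound on U_{2t}
    and U_{3t} on the right yields 2|Y| + 10t <= |X| + 7Rt + 3λ. *)

From Stdlib Require Import Reals Lra.
From mathcomp Require Import all_boot zify.

Lemma scard_count (l u : seq nat) : uniq u -> {subset l <= u} ->
  scard l = count (mem l) u.
Proof.
move=> uniq_u sub_lu; rewrite /scard -size_filter; apply: perm_size.
apply: uniq_perm; rewrite ?undup_uniq ?filter_uniq // => x.
rewrite mem_undup mem_filter -[mem l x]/(x \in l) andb_idr //.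
exact: sub_lu.
Qed.

Lemma sum_mem_count (l u : seq nat) : \sum_(x <- u) (x \in l) = count (mem l) u.
Proof. by rewrite -sum1_count [RHS]big_mkcond. Qed.

Lemma scard_sum_le (ls rs : seq (seq nat)) :
  (forall x, \sum_(l <- ls) (x \in l) <= \sum_(r <- rs) (x \in r)) ->
  \sum_(l <- ls) scard l <= \sum_(r <- rs) scard r.
Proof.
move=> le_mem; set u := undup (flatten (ls ++ rs)).
have scardE l : l \in ls ++ rs -> scard l = \sum_(x <- u) (x \in l).
  move=> l_in; rewrite sum_mem_count (@scard_count l u) ?undup_uniq // => x x_l.
  by rewrite mem_undup; apply/flattenP; exists l.
under eq_big_seq => l l_in do rewrite scardE ?mem_cat ?l_in //.
under [leqRHS]eq_big_seq => r r_in do rewrite scardE ?mem_cat ?r_in ?orbT //.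
by rewrite exchange_big [leqRHS]exchange_big; apply: leq_sum.
Qed.

Lemma indicator_count (y s a b u a1 a2 a3 b1 b2 b3 : bool) :
  y ==> a -> y ==> b ->
  y ==> ~~ a1 -> y ==> ~~ a3 -> y ==> ~~ b1 -> y ==> ~~ b3 ->
  a1 ==> ~~ b3 -> a3 ==> ~~ b1 ->
  a1 ==> a -> a2 ==> a -> b1 ==> b -> b2 ==> b ->
  a && b ==> s -> a3 && b3 ==> s ->
  a ==> u -> b ==> u -> a3 ==> u -> b3 ==> u ->
  2 * y + (a1 + a2 + a3) + (b1 + b2 + b3) <= s + 2 * (a || b) + u.
Proof. by move: y s a b u a1 a2 a3 b1 b2 b3; do 11 case. Qed.

Section PointwiseCount.

Variable F : bool -> nat -> nat -> seq nat.

Lemma FUP c t x :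
  reflect (exists tau kappa, [/\ 0 < kappa <= tau, tau <= t & x \in F c tau kappa])
          (x \in FU F c t).
Proof.
apply: (iffP flatten_mapP).
- case=> tau; rewrite mem_iota => tau_in /flatten_mapP [kappa].
  by rewrite mem_iota => kappa_in x_in; exists tau, kappa; split=> //; lia.
- case=> tau [kappa [/andP [kappa_gt0 le_kappa_tau] le_tau_t x_in]].
  exists tau; first by rewrite mem_iota; lia.
  by apply/flatten_mapP; exists kappa; rewrite ?mem_iota //; lia.
Qed.

Lemma mem_FU {c t tau kappa x} :
  0 < kappa <= tau -> tau <= t -> x \in F c tau kappa -> x \in FU F c t.
Proof. by move=> kappa_in le_tau_t x_in; apply/FUP; exists tau, kappa. Qed.

Lemma FU_sub {c t t'} : t <= t' -> {subset FU F c t <= FU F c t'}.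
Proof.
move=> le_t_t' x /FUP [tau [kappa [kappa_in le_tau_t x_in]]].
by apply: mem_FU x_in => //; apply: leq_trans le_t_t'.
Qed.

Hypothesis Fsys : is_Fsystem F.

Lemma Fsystem_disjoint {c t k t' k' x} :
  0 < k <= t -> 0 < k' <= t' -> k + k' <= maxn t t' ->
  x \in F c t k -> x \in F (~~ c) t' k' -> False.
Proof.
case: Fsys => _ [_ F2] kt k't' le_max.
case: c => [|] x_in x_in'; first exact: F2 kt k't' le_max x x_in x_in'.
by apply: F2 k't' kt _ x x_in' x_in; rewrite addnC maxnC.
Qed.

Variables t h : nat.
Hypotheses (t_gt0 : 0 < t) (le_t_h : t <= h) (le_h_2t : h <= 2 * t).

Let Y := Sset F t ++ Zset F h t.
Let X := Sset F (2 * t) ++ Zset F (3 * t) (2 * t).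
Let U s := FU F true s ++ FU F false s.

Lemma mem_Y_witness c x : x \in Y ->
  exists tau kappa, [/\ 0 < kappa <= tau, tau <= 2 * t, kappa <= t & x \in F c tau kappa].
Proof.
rewrite mem_cat !mem_filter => /orP [/andP [xB xA] | /andP [xB xA]].
- have /FUP [tau [kappa [kappa_in le_tau_t x_in]]] : x \in FU F c t by case: c.
  by exists tau, kappa; split=> //; lia.
- by exists h, t; split=> //; [lia | case: c].
Qed.

Lemma Y_sub_FU c x : x \in Y -> x \in FU F c (2 * t).
Proof.
by case/(mem_Y_witness c) => tau [kappa [kappa_in le_tau _ x_in]]; apply: mem_FU x_in.
Qed.

Lemma Y_notin_F {c tau k x} :
  0 < k -> k + t <= tau -> x \in Y -> x \in F c tau k -> False.
Proof.
move=> k_gt0 le_tau /(mem_Y_witness (~~ c)) [tau' [kappa [kappa_in _ le_kappa_t x_in']]].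
by move=> x_in; apply: (Fsystem_disjoint _ _ _ x_in x_in'); lia.
Qed.

Let t_in_2t : 0 < t <= 2 * t. Proof. lia. Qed.
Let t2_in_2t : 0 < 2 * t <= 2 * t. Proof. lia. Qed.
Let t2_in_3t : 0 < 2 * t <= 3 * t. Proof. lia. Qed.
Let le_2t_3t : 2 * t <= 3 * t. Proof. lia. Qed.

Lemma mem_count_le x :
  2 * (x \in Y)
    + ((x \in F true (2 * t) t) + (x \in F true (2 * t) (2 * t)) + (x \in F true (3 * t) (2 * t)))
    + ((x \in F false (2 * t) t) + (x \in F false (2 * t) (2 * t)) + (x \in F false (3 * t) (2 * t)))
  <= (x \in X) + 2 * (x \in U (2 * t)) + (x \in U (3 * t)).
Proof.
rewrite [x \in U (2 * t)]mem_cat; apply: indicator_count.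
- by apply/implyP; apply: Y_sub_FU.
- by apply/implyP; apply: Y_sub_FU.
all: try by apply/implyP=> x_Y; apply/negP; apply: (Y_notin_F _ _ x_Y); lia.
- by apply/implyP=> x_in; apply/negP; apply: (Fsystem_disjoint _ _ _ x_in); lia.
- by apply/implyP=> x_in; apply/negP; apply: (Fsystem_disjoint _ _ _ x_in); lia.
all: try by apply/implyP; apply: mem_FU.
- by apply/implyP=> /andP [xA xB]; rewrite mem_cat mem_filter xA xB.
- by apply/implyP=> /andP [xA xB]; rewrite mem_cat !mem_filter xA xB orbT.
all: apply/implyP=> x_in; rewrite mem_cat.
- by rewrite (FU_sub le_2t_3t _ x_in).
- by rewrite (FU_sub le_2t_3t _ x_in) orbT.
- by rewrite (mem_FU t2_in_3t (leqnn _) x_in).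
- by rewrite (mem_FU t2_in_3t (leqnn _) x_in) orbT.
Qed.

Lemma scard_count_bound :
  2 * scard Y + 10 * t <= scard X + 2 * scard (U (2 * t)) + scard (U (3 * t)).
Proof.
have [_ [F1 _]] := Fsys.
have := F1 true _ _ t_in_2t; have := F1 true _ _ t2_in_2t; have := F1 true _ _ t2_in_3t.
have := F1 false _ _ t_in_2t; have := F1 false _ _ t2_in_2t; have := F1 false _ _ t2_in_3t.
pose ls := [:: Y; Y; F true (2 * t) t; F true (2 * t) (2 * t); F true (3 * t) (2 * t);
               F false (2 * t) t; F false (2 * t) (2 * t); F false (3 * t) (2 * t)].
pose rs := [:: X; U (2 * t); U (2 * t); U (3 * t)].
suff /scard_sum_le : forall x, \sum_(l <- ls) (x \in l) <= \sum_(r <- rs) (x \in r).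
  by rewrite !big_cons !big_nil; lia.
by move=> x; rewrite !big_cons !big_nil; have := mem_count_le x; lia.
Qed.

End PointwiseCount.

Open Scope R_scope.

Theorem mainTheorem9 (F : bool -> nat -> nat -> seq nat) (R0 lam : R) :
  is_Fsystem F ->
  (forall t : nat, (0 < t)%N ->
     INR (scard (FU F true t ++ FU F false t)) <= R0 * INR t + lam) ->
  forall t : nat, (0 < t)%N -> ~~ odd t ->
    INR (scard (Sset F (2 * t) ++ Zset F (3 * t) (2 * t)))
    >= 2 * INR (scard (Sset F t ++ Zset F ((3 * t) %/ 2) t))
       + (10 - 7 * R0) * INR t - 3 * lam.
Proof.
move=> Fsys growth t t_gt0 _.
have le_t_h : (t <= 3 * t %/ 2)%N by lia.
have le_h_2t : (3 * t %/ 2 <= 2 * t)%N by lia.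
have [g2 g3] : (0 < 2 * t)%N /\ (0 < 3 * t)%N by lia.
move: (@scard_count_bound F Fsys t _ t_gt0 le_t_h le_h_2t) (growth _ g2) (growth _ g3).
set nY := scard (Sset F t ++ _); set nX := scard (Sset F (2 * t) ++ _).
set nU2 := scard (FU F true (2 * t) ++ _); set nU3 := scard (FU F true (3 * t) ++ _).
rewrite -!plusE -!multE => /leP/le_INR; rewrite !plus_INR /=.
lra.
Qed.
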